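(* Let $\mathcal{I}$ be the input model and let $\mathbf{P}$ (protocol) and $\mathbf{T}$ (task) be action models with proper partial epistemic frames. If there exists a guarded positive epistemic formula $\varphi$ such that $\mathcal{I}[\![\mathbf{T}]\!]\models\varphi$ but $\mathcal{I}[\![\mathbf{P}]\!]\not\models\varphi$, then the task $\mathbf{T}$ is not solvable by the protocol $\mathbf{P}$.
   Context: Agents $\mathsf{Ag}=\{0,\dots,n-1\}$, $n>1$; $\mathsf{Value}=\mathsf{Ag}$; atomic propositions $\mathsf{At}=\bigcup_a\mathsf{At}_a$ with $\mathsf{At}_a=\{\mathrm{input}_a^v\mid v\in\mathsf{Value}\}$; $\mathsf{At}_B=\bigcup_{a\in B}\mathsf{At}_a$. Epistemic formulas: $\varphi::=p\mid\neg\varphi\mid\varphi\wedge\varphi\mid\varphi\vee\varphi\mid K_a\varphi$. Let $\mathsf{false}=p\wedge\neg p$, $\mathrm{alive}(a)=\neg K_a\mathsf{false}$, $\mathrm{alive}(B)=\bigwedge_{a\in B}\mathrm{alive}(a)$. Guarded positive formulas: $\varphi::=(\mathrm{alive}(B)\Rightarrow\psi)\mid\varphi\wedge\varphi\mid\varphi\vee\varphi\mid K_a\varphi$ ($B\subseteq\mathsf{Ag}$), where $\psi$ is a propositional formula (built with $\neg,\wedge,\vee$) over atoms in $\mathsf{At}_B$. A partial epistemic model $\langle W,\sim,L\rangle$: $W$ nonempty finite, each $\sim_a$ a partial equivalence relation (symmetric, transitive), $L:W\to\mathcal{P}(\mathsf{At})$; $\mathrm{Alive}(w)=\{a\mid w\sim_a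 w\}$; $w\sim_A w'$ means $w\sim_a w'$ for all $a\in A$; proper means $w\ne w'$ implies $w\not\sim_a w'$ for some $a$. Satisfaction: $p$ true at $w$ iff $p\in L(w)$; Booleans as usual; $K_a\varphi$ true at $w$ iff $\varphi$ true at all $w'$ with $w\sim_aw'$; $\mathcal{M}\models\varphi$ means true at every world. Input model $\mathcal{I}$: worlds are the sets $X=\{(0,v_0),\dots,(n-1,v_{n-1})\}$ with $v_i\in\mathsf{Value}$; $X\sim_aY$ iff $X$ and $Y$ contain the same vertex of the form $(a,v)$; $L(X)=\{\mathrm{input}_a^v\mid (a,v)\in X\}$. An action model $\langle T,\sim,\mathsf{pre}\rangle$: a partial epistemic frame $\langle T,\sim\rangle$ plus $\mathsf{pre}$ mapping actions to formulas; $\mathrm{Alive}(t)=\{a\mid t\sim_at\}$. Partial product update $\mathcal{I}[\![\mathbf{A}]\!]$: with $\langle X\rangle_t=\{Y\mid X\sim^{\mathcal{I}}_{\mathrm{Alive}(t)}Y,\ \mathcal{I},Y\models\mathsf{pre}(t)\}$, worlds are $(\langle X\rangle_t,t)$ with $\mathrm{Alive}(t)\subseteq\mathrm{Alive}(X)$ and $\mathcal{I},X\models\mathsf{pre}(t)$; $(\langle X\rangle_t,t)\sim_a(\langle Y\rangle_s,s)$ iff $X\sim^{\mathcal{I}}_aY$ and $t\sim_as$; label $\bigcap_{X'\in\langle X\rangle_t}L(X')$. A morphism $f:\langle W,\sim,L\rangle\to\langle W',\sim',L'\rangle$ is a map $f:W\to\mathcal{P}(W')$ such that (i) $w\sim_a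 w'$ implies $u\sim'_au'$ for all $u\in f(w)$, $u'\in f(w')$; (ii) for each $w$ there is $w'\in f(w)$ with $f(w)=\{u\in W'\mid w'\sim'_{\mathrm{Alive}(w)}u\}$; (iii) for $w\in W$, $w'\in f(w)$: $L(w)\cap\mathsf{At}_{\mathrm{Alive}(w)}=L'(w')\cap\mathsf{At}_{\mathrm{Alive}(w)}$. The task $\mathbf{T}$ is solvable by $\mathbf{P}$ if there is a morphism $\delta:\mathcal{I}[\![\mathbf{P}]\!]\to\mathcal{I}[\![\mathbf{T}]\!]$ such that for every world $(E,p)$ of $\mathcal{I}[\![\mathbf{P}]\!]$ there is $(E',t)\in\delta((E,p))$ with $E\subseteq E'$. *)

From mathcomp Require Import all_boot.
Set Implicit Arguments. Unset Strict Implicit. Unset Printing Implicit Defensive.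

Section Defs.
Variable n : nat.

(* Agents = Values = 'I_n ; atom input_a^v is (Atom a v). *)
Inductive form : Type :=
| Atom of 'I_n & 'I_n
| Neg of form
| And of form & form
| Or of form & form
| K of 'I_n & form.

Definition falseF (a : 'I_n) : form := And (Atom a a) (Neg (Atom a a)).
Definition aliveF (a : 'I_n) : form := Neg (K a (falseF a)).
(* (alive(B) => psi), written as ~alive(b1) \/ ... \/ ~alive(bk) \/ psi *)
Definition guard_imp (B : {set 'I_n}) (psi : form) : form :=
  foldr (fun a acc => Or (Neg (aliveF a)) acc) psi (enum B).

Fixpoint prop_over (B : {set 'I_n}) (f : form) : bool :=
  match f with
  | Atom a _ => a \in B
  | Neg g => prop_over B g
  | And g h => prop_over B g && prop_over B h
  | Or g h => prop_over B g && prop_over B h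
  | K _ _ => false
  end.

Inductive guarded_pos : form -> Prop :=
| GP_imp B psi : prop_over B psi -> guarded_pos (guard_imp B psi)
| GP_and f g : guarded_pos f -> guarded_pos g -> guarded_pos (And f g)
| GP_or f g : guarded_pos f -> guarded_pos g -> guarded_pos (Or f g)
| GP_K a f : guarded_pos f -> guarded_pos (K a f).

Record pmodel : Type := PModel {
  mW : finType;
  mR : 'I_n -> rel mW;
  mL : mW -> 'I_n -> 'I_n -> bool (* mL w a v <-> input_a^v \in L(w) *) }.
Arguments mR : clear implicits.
Arguments mL : clear implicits.

Fixpoint sat (M : pmodel) (w : mW M) (f : form) {struct f} : bool :=
  match f with
  | Atom a v => mL M w a v
  | Neg g => ~~ sat w g
  | And g h => sat w g && sat w h
  | Or g h => sat w g || sat w h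
  | K a g => [forall w' : mW M, mR M a w w' ==> sat w' g]
  end.

Definition valid (M : pmodel) (f : form) : Prop := forall w : mW M, sat w f.

Definition Alive (M : pmodel) (w : mW M) : {set 'I_n} := [set a | mR M a w w].

(* input model: a world {(0,v0),...,(n-1,v_{n-1})} is the function a |-> v_a *)
Definition inW : finType := {ffun 'I_n -> 'I_n}.
Definition input_model : pmodel :=
  @PModel inW (fun a X Y => X a == Y a) (fun X a v => X a == v).

Record amodel : Type := AModel {
  aT : finType;
  aR : 'I_n -> rel aT;
  apre : aT -> form }.
Arguments aR : clear implicits.
Arguments apre : clear implicits.

Definition aAlive (A : amodel) (t : aT A) : {set 'I_n} := [set a | aR A a t t].

Definition partial_frame (A : amodel) : Prop :=
  forall a : 'I_n, symmetric (aR A a) /\ transitive (aR A a).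

Definition proper_frame (A : amodel) : Prop :=
  forall t t' : aT A, t != t' -> exists a, ~~ aR A a t t'.

Definition rel_on (M : pmodel) (B : {set 'I_n}) (w u : mW M) : bool :=
  [forall a in B, mR M a w u].

Definition block (A : amodel) (X : inW) (t : aT A) : {set inW} :=
  [set Y : inW | rel_on (M := input_model) (aAlive t) X Y && sat (M := input_model) Y (apre A t)].

Definition pu_is_world (A : amodel) (x : {set inW} * aT A) : bool :=
  [exists X : inW, [&& aAlive x.2 \subset Alive (M := input_model) X,
                      sat (M := input_model) X (apre A x.2) & x.1 == block X x.2]].

Definition pu_W (A : amodel) : finType := {x : {set inW} * aT A | pu_is_world x}.

Definition pu_R (A : amodel) (a : 'I_n) (x y : pu_W A) : bool :=
  [exists X : inW, [exists Y : inW,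
     [&& (val x).1 == block X (val x).2, (val y).1 == block Y (val y).2,
         X a == Y a & aR A a (val x).2 (val y).2]]].

Definition pu_L (A : amodel) (x : pu_W A) (a v : 'I_n) : bool :=
  [forall X in (val x).1, X a == v].

Definition product_update (A : amodel) : pmodel :=
  @PModel (pu_W A) (@pu_R A) (@pu_L A).

Definition is_morphism (M M' : pmodel) (f : mW M -> {set mW M'}) : Prop :=
  [/\ (forall (a : 'I_n) (w w' : mW M), mR M a w w' ->
         forall u u', u \in f w -> u' \in f w' -> mR M' a u u'),
      (forall w : mW M, exists2 w', w' \in f w &
         f w = [set u | rel_on (M := M') (Alive w) w' u]) &
      (forall (w : mW M) (w' : mW M'), w' \in f w ->
         forall a v, a \in Alive w -> mL M w a v = mL M' w' a v)].

Definition solvable (P T : amodel) : Prop :=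
  exists2 delta : mW (product_update P) -> {set mW (product_update T)},
    is_morphism delta &
    forall w : mW (product_update P),
      exists2 w' : mW (product_update T), w' \in delta w &
        (val w).1 \subset (val w').1.

End Defs.

(** Guarded positive formulas are reflected by morphisms: if [w'] is in the
    image of [w] and [w'] satisfies a guarded positive formula, so does [w].
    A guard [alive(B) => psi] either fails at [w], or every agent of [B] is
    alive at [w], hence (by the first morphism condition) at [w'], so [w']
    satisfies [psi]; as [psi] only mentions inputs of agents of [B], which
    [w] and [w'] label alike, [w] satisfies [psi] too. Conjunction,
    disjunction and [K_a] then follow by induction, the last one because
    every [a]-successor of [w] has a nonempty image made of [a]-successors
    of [w']. A solving morphism would thus carry the validity of [phi] in
    [I[[T]]] back to [I[[P]]]. *)

From mathcomp Require Import all_boot.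
Set Implicit Arguments. Unset Strict Implicit. Unset Printing Implicit Defensive.

Section Satisfaction.
Variables (n : nat) (M : pmodel n).

Lemma sat_aliveF (w : mW M) (a : 'I_n) :
  sat w (aliveF a) = [exists u, mR a w u].
Proof.
rewrite /= negb_forall; apply: eq_existsb => u.
by rewrite andbN implybF negbK.
Qed.

Lemma sat_guard_imp (w : mW M) (B : {set 'I_n}) (psi : form n) :
  sat w (guard_imp B psi) = [forall b in B, [exists u, mR b w u]] ==> sat w psi.
Proof.
have -> : [forall b in B, [exists u, mR b w u]]
          = all (fun b => [exists u, mR b w u]) (enum B).
  apply/forall_inP/allP => [Hall b|Hall b Hb]; first by rewrite mem_enum; exact: Hall.
  by apply: Hall; rewrite mem_enum.
rewrite /guard_imp; elim: (enum B) => [//|b s IH] /=.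
rewrite IH -[X in ~~ X || _]/(sat w (aliveF b)) sat_aliveF.
by case: [exists u, _].
Qed.

End Satisfaction.

Lemma sat_prop_over (n : nat) (M M' : pmodel n) (w : mW M) (w' : mW M')
    (B : {set 'I_n}) (psi : form n) :
  prop_over B psi -> (forall a v, a \in B -> mL w a v = mL w' a v) ->
  sat w psi = sat w' psi.
Proof.
move=> + HL; elim: psi => [a v|g IH|g IHg h IHh|g IHg h IHh|//] /=.
- exact: HL.
- by move=> /IH ->.
- by move=> /andP[/IHg -> /IHh ->].
- by move=> /andP[/IHg -> /IHh ->].
Qed.

Definition domain_reflexive (n : nat) (M : pmodel n) : Prop :=
  forall a (w u : mW M), mR a w u -> mR a w w.

Section MorphismReflection.
Variables (n : nat) (M M' : pmodel n) (f : mW M -> {set mW M'}).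
Hypothesis f_morph : is_morphism f.
Hypothesis M_refl : domain_reflexive M.

Lemma morphism_reflects_guard_imp (B : {set 'I_n}) (psi : form n) w w' :
  prop_over B psi -> w' \in f w ->
  sat w' (guard_imp B psi) -> sat w (guard_imp B psi).
Proof.
have [f_rel _ f_lab] := f_morph.
move=> Hpsi Hw'; rewrite !sat_guard_imp.
have [B_alive|] := boolP [forall b in B, [exists u, mR b w u]]; last by [].
have B_sub : B \subset Alive w.
  apply/subsetP => b Hb; rewrite inE.
  by have /existsP[u /M_refl] := forall_inP B_alive b Hb.
have B_alive' : [forall b in B, [exists u, mR b w' u]].
  apply/forall_inP => b Hb; apply/existsP; exists w'.
  by apply: (f_rel b w w) => //; move/subsetP: B_sub => /(_ b Hb); rewrite inE.
rewrite B_alive' /= (sat_prop_over (w' := w') Hpsi) // => a v Ha.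
by apply: f_lab => //; exact: (subsetP B_sub).
Qed.

Lemma morphism_reflects_guarded_pos (phi : form n) :
  guarded_pos phi -> forall w w', w' \in f w -> sat w' phi -> sat w phi.
Proof.
have [f_rel f_img _] := f_morph.
elim=> {phi} [B psi Hpsi|g h _ IHg _ IHh|g h _ IHg _ IHh|a g _ IH] w w' Hw' /=.
- exact: morphism_reflects_guard_imp.
- by case/andP=> /(IHg w w' Hw')-> /(IHh w w' Hw')->.
- by case/orP=> [/(IHg w w' Hw')->|/(IHh w w' Hw')->]; rewrite ?orbT.
- move=> /forall_inP Hall; apply/forall_inP => u Hwu.
  have [u' Hu' _] := f_img u.
  exact: (IH u u' Hu' (Hall u' (f_rel a w u Hwu w' u' Hw' Hu'))).
Qed.

Lemma morphism_reflects_valid_guarded_pos (phi : form n) :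
  guarded_pos phi -> valid M' phi -> valid M phi.
Proof.
have [_ f_img _] := f_morph.
move=> Hphi HM' w; have [w' Hw' _] := f_img w.
exact: (morphism_reflects_guarded_pos Hphi Hw' (HM' w')).
Qed.

End MorphismReflection.

Lemma product_update_domain_reflexive (n : nat) (A : amodel n) :
  partial_frame A -> domain_reflexive (product_update A).
Proof.
move=> HA a x y /existsP[X] /existsP[Y] /and4P[HX _ _ Hxy].
have [Asym Atrans] := HA a.
apply/existsP; exists X; apply/existsP; exists X.
by rewrite HX eqxx (Atrans _ _ _ Hxy) // Asym.
Qed.

Theorem theorem3p6 (n : nat) (Hn : 1 < n) (P T : amodel n) :
  partial_frame P -> proper_frame P ->
  partial_frame T -> proper_frame T ->
  (exists phi : form n, [/\ guarded_pos phi,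
                            valid (product_update T) phi &
                            ~ valid (product_update P) phi]) ->
  ~ solvable P T.
Proof.
move=> HP _ _ _ [phi [Hphi HT HnP]] [delta Hdelta _].
apply: HnP.
exact: (morphism_reflects_valid_guarded_pos Hdelta
          (product_update_domain_reflexive HP) Hphi HT).
Qed.
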